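(* There is an absolute constant $c>0$ such that the following holds. Let $n_1,n_2,n_3\in\mathbb{Z}\setminus\{0\}$ with $|n_1|\ge|n_2|\ge|n_3|$ and set $n=n_1+n_2+n_3$. Then at least one of the following is true: (I) (resonance) $n_i=n$ for some $1\le i\le3$; (II) $|n_3|\ge c|n_1|$; (III) $|\Phi_3(n_1,n_2,n_3)|=|n^5-n_1^5-n_2^5-n_3^5|\ge c\,n_1^4$.
   Context: $\Phi_3(n_1,n_2,n_3)=n^5-n_1^5-n_2^5-n_3^5$ where $n=n_1+n_2+n_3$. The paper writes the alternatives with $\gtrsim$, meaning inequalities up to an absolute implicit constant. *)

From Stdlib Require Import Reals ZArith.
Open Scope Z_scope.
Definition Phi3 (n1 n2 n3 : Z) : Z :=
  let n := n1 + n2 + n3 in n ^ 5 - n1 ^ 5 - n2 ^ 5 - n3 ^ 5.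

(* Phi3 a b c = 5 (a+b)(b+c)(c+a) Q with 2Q = a^2 + b^2 + c^2 + (a+b+c)^2 >= a^2.
   The factor a+c is at least 3|a|/4 when |c| <= |a|/4, and the nonzero integers
   a+b and b+c have a product at least half their sum, which is at least
   |a-c| >= 3|a|/4.  Hence |Phi3| >= (45/64) a^4 away from resonance, i.e. unless
   one of the pair sums vanishes, which is exactly n_i = n. *)

From Stdlib Require Import Reals ZArith Lia Lra.

Definition Phi3_quadratic (a b c : Z) : Z := a*a + b*b + c*c + a*b + b*c + c*a.

Lemma Phi3_factor (a b c : Z) :
  Phi3 a b c = 5 * (a + b) * (b + c) * (c + a) * Phi3_quadratic a b c.
Proof. unfold Phi3, Phi3_quadratic; ring. Qed.

Lemma Phi3_quadratic_lower (a b c : Z) : a * a <= 2 * Phi3_quadratic a b c.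
Proof.
  assert (E : 2 * Phi3_quadratic a b c - a * a
              = b * b + c * c + (a + b + c) * (a + b + c))
    by (unfold Phi3_quadratic; ring).
  pose proof (Z.square_nonneg b); pose proof (Z.square_nonneg c).
  pose proof (Z.square_nonneg (a + b + c)).
  lia.
Qed.

Lemma add_le_2mul (x y : Z) : 1 <= x -> 1 <= y -> x + y <= 2 * (x * y).
Proof. intros Hx Hy; nia. Qed.

Lemma abs_sub_le_2mul_abs_add (a b c : Z) :
  a + b <> 0 -> b + c <> 0 ->
  Z.abs (a - c) <= 2 * (Z.abs (a + b) * Z.abs (b + c)).
Proof.
  intros Hab Hbc.
  assert (Z.abs (a - c) <= Z.abs (a + b) + Z.abs (b + c)) by lia.
  pose proof (add_le_2mul (Z.abs (a + b)) (Z.abs (b + c))).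
  lia.
Qed.

Lemma Phi3_lower_bound (a b c : Z) :
  a + b <> 0 -> b + c <> 0 -> c + a <> 0 -> 4 * Z.abs c <= Z.abs a ->
  a ^ 4 <= 2 * Z.abs (Phi3 a b c).
Proof.
  intros Hab Hbc Hca Hc.
  set (AB := Z.abs (a + b) * Z.abs (b + c)).
  set (C := Z.abs (c + a)).
  set (Q := Phi3_quadratic a b c).
  assert (HQ : Z.abs a * Z.abs a <= 2 * Q).
  { rewrite <- Z.abs_mul, Z.abs_eq by apply Z.square_nonneg.
    apply Phi3_quadratic_lower. }
  assert (HAB : 3 * Z.abs a <= 8 * AB)
    by (pose proof (abs_sub_le_2mul_abs_add a b c Hab Hbc); unfold AB; lia).
  assert (HC : 3 * Z.abs a <= 4 * C) by (unfold C; lia).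
  assert (H3 : 3 * Z.abs a * (3 * Z.abs a) <= 8 * AB * (4 * C))
    by (apply Z.mul_le_mono_nonneg; lia).
  assert (H4 : 3 * Z.abs a * (3 * Z.abs a) * (Z.abs a * Z.abs a)
               <= 8 * AB * (4 * C) * (2 * Q))
    by (apply Z.mul_le_mono_nonneg; nia).
  assert (Habs : Z.abs (Phi3 a b c) = 5 * (AB * C * Q)).
  { rewrite Phi3_factor; fold Q.
    rewrite !Z.abs_mul, (Z.abs_eq Q) by nia.
    unfold AB, C; change (Z.abs 5) with 5; ring. }
  assert (Ha4 : a ^ 4 = Z.abs a * Z.abs a * (Z.abs a * Z.abs a))
    by (rewrite <- !Z.abs_mul, Z.abs_eq by nia; ring).
  assert (0 <= AB * C * Q) by (unfold AB, C; nia).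
  rewrite Habs, Ha4.
  nia.
Qed.

Theorem proposition3p1 :
  exists c : R, (0 < c)%R /\
    forall n1 n2 n3 : Z,
      n1 <> 0%Z -> n2 <> 0%Z -> n3 <> 0%Z ->
      (Z.abs n1 >= Z.abs n2)%Z -> (Z.abs n2 >= Z.abs n3)%Z ->
      let n := (n1 + n2 + n3)%Z in
      (n1 = n \/ n2 = n \/ n3 = n) \/
      (IZR (Z.abs n3) >= c * IZR (Z.abs n1))%R \/
      (IZR (Z.abs (Phi3 n1 n2 n3)) >= c * IZR (n1 ^ 4))%R.
Proof.
  exists (1 / 4)%R; split; [lra |].
  intros n1 n2 n3 _ _ _ _ _ n; unfold n.
  destruct (Z.eq_dec (n2 + n3) 0) as [| H23]; [left; left; lia |].
  destruct (Z.eq_dec (n3 + n1) 0) as [| H31]; [left; right; left; lia |].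
  destruct (Z.eq_dec (n1 + n2) 0) as [| H12]; [left; right; right; lia |].
  right.
  destruct (Z_lt_le_dec (Z.abs n1) (4 * Z.abs n3)) as [Hbig | Hsmall].
  - left. apply IZR_lt in Hbig. rewrite mult_IZR in Hbig. lra.
  - right. pose proof (Phi3_lower_bound n1 n2 n3 H12 H23 H31 Hsmall) as K.
    apply IZR_le in K. rewrite mult_IZR in K.
    pose proof (IZR_le 0 _ (Z.abs_nonneg (Phi3 n1 n2 n3))). lra.
Qed.
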